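(* Let $R$ be a noetherian integral domain, $n\ge1$, $R[n]=R[t]/(t^n)$, and $M$ an $R[n]$-module of finite type. Let $M^\vee=\mathrm{Hom}_{R[n]}(M,R[n])$ and let $t_M:M\to M^{\vee\vee}$ be the canonical morphism, $t_M(m)(\phi)=\phi(m)$. Then $\mathrm{coker}(t_M)$ is a torsion module.
   Context: An element $u=\sum_{i=0}^{n-1}u_it^i\in R[n]$ ($u_i\in R$) is a non-zero-divisor iff $u_0\ne0$; let $S_n$ be the set of non-zero-divisors. For an $R[n]$-module $N$, the torsion submodule $T(N)$ is the set of $m\in N$ such that $\alpha m=0$ for some $\alpha\in S_n$; $N$ is a torsion module if $N=T(N)$. *)

From HB Require Import structures.
From mathcomp Require Import all_boot all_algebra.
Set Implicit Arguments. Unset Strict Implicit. Unset Printing Implicit Defensive.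
Import GRing.Theory.
Local Open Scope ring_scope.

(* R[n] = R[t]/(t^n), realised by MathComp's quotient ring {poly %/ 'X^n}
   (for n >= 1, 'X^n is monic of size >= 2, so this is exactly R[t]/(t^n)). *)
Definition Rn (R : comNzRingType) (n : nat) := {poly %/ ('X^n : {poly R})}.

Definition is_ideal (A : comNzRingType) (I : A -> Prop) :=
  [/\ I 0, (forall x y, I x -> I y -> I (x + y)) & (forall a x, I x -> I (a * x))].

Definition noetherian (A : comNzRingType) :=
  forall I : A -> Prop, is_ideal I ->
    exists (k : nat) (g : 'I_k -> A),
      forall x, I x <-> exists c : 'I_k -> A, x = \sum_(i < k) c i * g i.

Definition finite_type (A : comNzRingType) (M : lmodType A) :=
  exists (k : nat) (v : 'I_k -> M),
    forall m : M, exists c : 'I_k -> A, m = \sum_(i < k) c i *: v i.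

Definition nonzerodivisor (A : comNzRingType) (a : A) :=
  forall x : A, a * x = 0 -> x = 0.

Definition is_dual (A : comNzRingType) (M : lmodType A) (phi : M -> A) :=
  forall (a : A) (x y : M), phi (a *: x + y) = a * phi x + phi y.

(* psi is an element of the bidual M^vv = Hom_A(M^v, A): an A-linear map on
   the dual (only its values on elements of M^v matter) *)
Definition is_bidual (A : comNzRingType) (M : lmodType A) (psi : (M -> A) -> A) :=
  forall (a : A) (phi1 phi2 : M -> A), is_dual phi1 -> is_dual phi2 ->
    psi (fun m => a * phi1 m + phi2 m) = a * psi phi1 + psi phi2.

Definition tM (A : comNzRingType) (M : lmodType A) (m : M) : (M -> A) -> A :=
  fun phi => phi m.

(* coker(t_M) is torsion: every element psi of M^vv has a multiple alpha*psi,
   alpha a non-zero-divisor, lying in the image of t_M (equality in M^vv,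
   i.e. as maps on M^v) *)
Definition coker_tM_torsion (A : comNzRingType) (M : lmodType A) :=
  forall psi : (M -> A) -> A, is_bidual psi ->
    exists alpha : A, nonzerodivisor alpha /\
      exists m : M, forall phi : M -> A, is_dual phi ->
        alpha * psi phi = tM m phi.

From HB Require Import structures.
From mathcomp Require Import all_boot all_algebra.
From Stdlib Require Import ClassicalEpsilon FunctionalExtensionality.
Set Implicit Arguments. Unset Strict Implicit. Unset Printing Implicit Defensive.
Import GRing.Theory.
Local Open Scope ring_scope.

(* Write n = nn.+1 and let top_coef p be the coefficient of t^nn in p.  The
   R-bilinear pairing (q, p) |-> top_coef (q * p) on R[n] is perfect: every
   R-linear form on R[n] is top_coef (q * _) for some q, and p is determined
   by these values.  Fix generators v_1, ..., v_k of M and psi in M^vv.  The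
   R-linear form phi |-> top_coef (psi phi) on M^v depends R-linearly on the
   coefficient matrix of (phi v_i)_i, since a phi vanishing on the generators
   is 0.  Over Frac R this form extends from the span of these matrices to all
   matrices, so after clearing a denominator r <> 0 it is given by a matrix
   over R; representing its rows by q_1, ..., q_k, the element
   m = sum_i q_i v_i satisfies top_coef (r psi phi) = top_coef (phi m) for all
   phi.  Applying this to q phi for every q and using perfectness of the
   pairing gives r psi = t_M m. *)

Lemma ex_maxn_classic (Q : nat -> Prop) (m : nat) :
  (exists i, Q i) -> (forall i, Q i -> (i <= m)%N) ->
  exists2 d, Q d & forall i, Q i -> (i <= d)%N.
Proof.
move=> exQ ubQ; pose q i : bool := excluded_middle_informative (Q i).
have qP i : reflect (Q i) (q i) := sumboolP _.
have exq : exists i, q i by case: exQ => i /qP; exists i.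
have ubq i : q i -> (i <= m)%N by move/qP/ubQ.
by case: (ex_maxnP exq ubq) => d /qP Qd maxd; exists d => // i /qP /maxd.
Qed.

Section FractionMatrices.
Variable R : idomainType.
Local Open Scope quotient_scope.
Local Notation "x %:F" := (@tofrac R x).

Lemma tofrac_inj : injective (@tofrac R).
Proof. by move=> p q /eqP; rewrite tofrac_eq => /eqP. Qed.

Lemma map_mx_tofrac_inj m n : injective (map_mx (@tofrac R) : 'M_(m, n) -> _).
Proof.
move=> A B /matrixP AB; apply/matrixP => i j; apply: tofrac_inj.
by have := AB i j; rewrite !mxE.
Qed.

Lemma frac_numden (x : {fraction R}) : exists2 b : R, b != 0 & exists a, x * b%:F = a%:F.
Proof.
elim/quotW: x => y; exists \d_y; [exact: denom_ratioP | exists \n_y].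
have piE1 c : c%:F = \pi_{fraction R} (Ratio c 1) by rewrite /tofrac; unlock.
rewrite !piE1 /=.
change (FracField.mul (\pi_{fraction R} y) (\pi_{fraction R} (Ratio \d_y 1))
        = \pi_{fraction R} (Ratio \n_y 1)).
rewrite piE; apply/eqmodP => /=; rewrite FracField.equivfE /FracField.mulf /=.
by rewrite !numden_Ratio ?mulf_neq0 ?oner_eq0 ?denom_ratioP // !mulr1 mulrC.
Qed.

Lemma clear_denominators m n (A : 'M[{fraction R}]_(m, n)) :
  exists2 b : R, b != 0 & exists B : 'M[R]_(m, n), b%:F *: A = map_mx (@tofrac R) B.
Proof.
have /fin_all_exists [nd ndP] : forall ij : 'I_m * 'I_n,
    exists nd : R * R, nd.2 != 0 /\ A ij.1 ij.2 * nd.2%:F = nd.1%:F.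
  by case=> i j; have [b bn0 [a ha]] := frac_numden (A i j); exists (a, b).
exists (\prod_ij (nd ij).2).
  by rewrite prodf_seq_neq0; apply/allP => ij _; case: (ndP ij).
exists (\matrix_(i, j) ((nd (i, j)).1 * \prod_(ij | ij != (i, j)) (nd ij).2)).
apply/matrixP => i j; rewrite !mxE (bigD1 (i, j)) //= !rmorphM rmorph_prod.
rewrite mulrAC [_ * A i j]mulrC.
by case: (ndP (i, j)) => _ /= ->.
Qed.
End FractionMatrices.

Definition factors_linearly (R : pzRingType) (V : lmodType R) (T : Type)
    (P : T -> Prop) (E : T -> V) (f : T -> R) :=
  forall (I : Type) (r : seq I) (a : I -> R) (x : I -> T), (forall i, P (x i)) ->
    \sum_(i <- r) a i *: E (x i) = 0 -> \sum_(i <- r) a i * f (x i) = 0.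

Section FactorsLinearlyRow.
Variables (R : idomainType) (T : Type) (P : T -> Prop) (N : nat).
Variables (E : T -> 'rV[R]_N) (f : T -> R).
Hypothesis fE : factors_linearly P E f.
Local Notation "x %:F" := (@tofrac R x).
Local Notation "A ^F" := (map_mx (@tofrac R) A) (at level 2, format "A ^F").

Lemma exists_free_spanning_family : exists d (xs : 'I_d -> T),
  [/\ forall i, P (xs i), row_free (\matrix_i E (xs i))^F &
      forall x, P x -> ((E x)^F <= (\matrix_i E (xs i))^F)%MS].
Proof.
pose Free d := exists xs : 'I_d -> T,
  (forall i, P (xs i)) /\ row_free (\matrix_i E (xs i))^F.
have Free0 : Free 0%N.
  exists (ffun0 (card_ord 0)); split; first by case.
  by rewrite /row_free -leqn0 rank_leq_row.
have Free_le d : Free d -> (d <= N)%N by case=> xs [_ /eqP <-]; apply: rank_leq_col.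
have [d [xs [Pxs freeX]] maxd] := ex_maxn_classic (ex_intro _ _ Free0) Free_le.
exists d, xs; split=> // x Px; apply/negPn/negP => notin.
pose ys (i : 'I_(1 + d)) := if split i is inr j then xs j else x.
have Yeq : \matrix_i E (ys i) = col_mx (E x) (\matrix_i E (xs i)).
  by apply/matrixP => i j; rewrite !mxE /ys; case: (split i) => k; rewrite ?mxE ?ord1.
suff /maxd : Free d.+1 by rewrite ltnn.
exists ys; split; first by move=> i; rewrite /ys; case: split.
have ltX : ((\matrix_i E (xs i))^F < (\matrix_i E (ys i))^F)%MS.
  by rewrite Yeq map_col_mx ltmxE col_mx_sub (negbTE notin) -addsmxE addsmxSr.
by rewrite /row_free eqn_leq rank_leq_row /=; move: (rank_ltmx ltX); rewrite (eqP freeX).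
Qed.

Lemma factors_linearly_frac_comb d (xs : 'I_d -> T) x (w : 'rV[{fraction R}]_d) :
  (forall i, P (xs i)) -> P x -> (E x)^F = w *m (\matrix_i E (xs i))^F ->
  (f x)%:F = \sum_l w 0 l * (f (xs l))%:F.
Proof.
move=> Pxs Px hw; have [s sn0 [a ha]] := clear_denominators w.
have relE : s *: E x = a *m \matrix_i E (xs i).
  by apply: map_mx_tofrac_inj; rewrite map_mxZ map_mxM -ha hw scalemxAl.
have relf : s * f x = \sum_l a 0 l * f (xs l).
  (* the relation s *: E x - \sum_l a 0 l *: E (xs l) = 0, with None indexing x *)
  pose ys (o : option 'I_d) := if o is Some l then xs l else x.
  pose b (o : option 'I_d) := if o is Some l then - a 0 l else s.
  have Pys o : P (ys o) by case: o.
  have := @fE _ (None :: map Some (index_enum 'I_d)) b ys Pys.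
  rewrite !big_cons !big_map /= => /(_ _)/eqP; rewrite addr_eq0 => /(_ _)/eqP -> //.
    by rewrite -sumrN; apply: eq_bigr => l _; rewrite mulNr opprK.
  rewrite relE mulmx_sum_row -big_split big1 // => l _.
  by rewrite /= rowK scaleNr addrN.
apply: (mulfI (_ : s%:F != 0)); first by rewrite tofrac_eq0.
rewrite -tofracM relf rmorph_sum mulr_sumr; apply: eq_bigr => l _.
rewrite rmorphM mulrA; congr (_ * _).
by have := congr1 (fun A : 'rV_d => A 0 l) ha; rewrite !mxE => ->.
Qed.

Lemma factors_linearly_frac : exists cK : 'rV[{fraction R}]_N,
  forall x, P x -> (f x)%:F = ((E x)^F *m cK^T) 0 0.
Proof.
have [d [xs [Pxs freeX spanX]]] := exists_free_spanning_family.
set X := (\matrix_i E (xs i))^F.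
pose B := \row_l (f (xs l))%:F.
have fullXT : row_full X^T by rewrite /row_full mxrank_tr.
exists (B *m pinvmx X^T) => x Px; have [w hw] := submxP (spanX x Px).
rewrite (factors_linearly_frac_comb Pxs Px hw) hw -/X -mulmxA -[X *m _]trmxK trmx_mul trmxK.
by rewrite mulmxKpV ?submx_full // mxE; apply: eq_bigr => l _; rewrite !mxE.
Qed.

Lemma factors_linearly_row : exists2 r : R, r != 0 &
  exists c : 'rV[R]_N, forall x, P x -> r * f x = \sum_j c 0 j * E x 0 j.
Proof.
have [cK hcK] := factors_linearly_frac; have [r rn0 [c hc]] := clear_denominators cK.
exists r => //; exists c => x Px; apply: tofrac_inj.
rewrite tofracM hcK // mxE rmorph_sum mulr_sumr; apply: eq_bigr => j _.
rewrite !mxE rmorphM mulrCA mulrC; congr (_ * _).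
by have := congr1 (fun A : 'rV_N => A 0 j) hc; rewrite !mxE.
Qed.

End FactorsLinearlyRow.

Lemma sum_mxvec_mul (R : comPzRingType) m n (A B : 'M[R]_(m, n)) :
  \sum_k mxvec A 0 k * mxvec B 0 k = \sum_i \sum_j A i j * B i j.
Proof.
rewrite (reindex _ (curry_mxvec_bij _ _)) pair_big /=.
by apply: eq_bigr => -[i j] _; rewrite !mxvecE.
Qed.

Lemma factors_linearly_mx (R : idomainType) (T : Type) (P : T -> Prop) m n
    (E : T -> 'M[R]_(m, n)) (f : T -> R) :
  factors_linearly P E f -> exists2 r : R, r != 0 &
    exists C : 'M[R]_(m, n), forall x, P x -> r * f x = \sum_i \sum_j C i j * E x i j.
Proof.
move=> fE; have fvecE : factors_linearly P (fun x => mxvec (E x)) f.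
  move=> I r a x Px hsum; apply: fE => //; apply/eqP; rewrite -mxvec_eq0 linear_sum.
  by rewrite -[X in _ == X]hsum; apply/eqP; apply: eq_bigr => i _; rewrite linearZ.
have [r rn0 [c hc]] := factors_linearly_row fvecE.
by exists r => //; exists (vec_mx c) => x Px; rewrite hc // -sum_mxvec_mul vec_mxK.
Qed.

Section Duals.
Variables (A : comNzRingType) (M : lmodType A).

Lemma dual0 (phi : M -> A) : is_dual phi -> phi 0 = 0.
Proof.
move=> dphi; have := dphi 1 0 0; rewrite scale1r addr0 mul1r => /eqP.
by rewrite -subr_eq subrr eq_sym => /eqP.
Qed.

Lemma dual_lin_comb (phi : M -> A) k (c : 'I_k -> A) (v : 'I_k -> M) :
  is_dual phi -> phi (\sum_i c i *: v i) = \sum_i c i * phi (v i).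
Proof.
by move=> dphi; elim/big_rec2: _ => [|i y1 y2 _ <-]; [apply: dual0 | apply: dphi].
Qed.

Lemma dual_sum I (r : seq I) (a : I -> A) (phi : I -> M -> A) :
  (forall i, is_dual (phi i)) -> is_dual (fun m => \sum_(i <- r) a i * phi i m).
Proof.
move=> dphi b x y; rewrite mulr_sumr -big_split; apply: eq_bigr => i _ /=.
by rewrite dphi mulrDr mulrCA.
Qed.

Lemma dual_scale (a : A) (phi : M -> A) : is_dual phi -> is_dual (fun m => a * phi m).
Proof. by move=> dphi b x y; rewrite dphi mulrDr mulrCA. Qed.

Lemma dual_zero : is_dual (fun _ : M => 0).
Proof. by move=> a x y; rewrite mulr0 addr0. Qed.

Lemma dual_eq0 k (v : 'I_k -> M) (phi : M -> A) :
  (forall m, exists c : 'I_k -> A, m = \sum_i c i *: v i) -> is_dual phi ->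
  (forall i, phi (v i) = 0) -> phi = fun _ => 0.
Proof.
move=> v_gen dphi phi_v; apply: functional_extensionality => m.
have [c ->] := v_gen m; rewrite dual_lin_comb // big1 // => i _.
by rewrite phi_v mulr0.
Qed.

Variable psi : (M -> A) -> A.
Hypothesis psi_bidual : is_bidual psi.

Lemma bidual0 : psi (fun _ => 0) = 0.
Proof.
have := psi_bidual 1 dual_zero dual_zero.
have -> : (fun _ : M => 1 * 0 + 0) = (fun _ => 0 : A).
  by apply: functional_extensionality => m; rewrite mulr0 addr0.
by rewrite mul1r => /eqP; rewrite -subr_eq subrr eq_sym => /eqP.
Qed.

Lemma bidual_sum I (r : seq I) (a : I -> A) (phi : I -> M -> A) :
  (forall i, is_dual (phi i)) ->
  psi (fun m => \sum_(i <- r) a i * phi i m) = \sum_(i <- r) a i * psi (phi i).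
Proof.
move=> dphi; elim: r => [|j r IHr].
  rewrite big_nil -[X in _ = X]bidual0; congr psi.
  by apply: functional_extensionality => m; rewrite big_nil.
have -> : (fun m => \sum_(i <- j :: r) a i * phi i m) =
    (fun m => a j * phi j m + \sum_(i <- r) a i * phi i m).
  by apply: functional_extensionality => m; rewrite big_cons.
by rewrite psi_bidual ?IHr ?big_cons //; apply: dual_sum.
Qed.

Lemma bidual_scale (a : A) (phi : M -> A) :
  is_dual phi -> psi (fun m => a * phi m) = a * psi phi.
Proof.
move=> dphi; have := psi_bidual a dphi dual_zero; rewrite bidual0 addr0 => <-.
by congr psi; apply: functional_extensionality => m; rewrite addr0.
Qed.

End Duals.

Section TruncatedPolynomials.
Variables (R : comNzRingType) (nn : nat).
Local Notation A := (Rn R nn.+1).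

Lemma size_Rn (p : A) : (size (polyn p) <= nn.+1)%N.
Proof. by rewrite -ltnS (leq_trans (size_mk_monic p)) // mk_monic_Xn size_polyXn. Qed.

Definition top_coef (p : A) : R := (polyn p)`_nn.

Lemma top_coef_sum I (r : seq I) (p : I -> A) :
  top_coef (\sum_(i <- r) p i) = \sum_(i <- r) top_coef (p i).
Proof. by rewrite /top_coef poly_of_qpoly_sum coef_sum. Qed.

Lemma top_coef_scalar (a : R) (p : A) : top_coef (a%:A * p) = a * top_coef p.
Proof. by rewrite /top_coef mulr_algl poly_of_qpolyZ coefZ. Qed.

Lemma top_coefM (p q : A) :
  top_coef (p * q) = \sum_(j < nn.+1) (polyn p)`_(nn - j) * (polyn q)`_j.
Proof.
have rmodp_take (s : {poly R}) :
    Pdiv.CommonRing.rmodp s (mk_monic ('X^(nn.+1) : {poly R})) = take_poly nn.+1 s.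
  by rewrite mk_monic_Xn -Pdiv.RingMonic.take_poly_rmodp.
by rewrite /top_coef poly_of_qpolyM rmodp_take coef_take_poly ltnSn coefMr.
Qed.

Lemma top_coef_representation (u : 'I_nn.+1 -> R) :
  exists q : A, forall p, top_coef (q * p) = \sum_j u j * (polyn p)`_j.
Proof.
pose s : {poly R} := \poly_(l < nn.+1) u (inord (nn - l)).
have s_small : polyn (in_qpoly ('X^(nn.+1) : {poly R}) s) = s.
  by rewrite in_qpoly_small // mk_monic_Xn size_polyXn ltnS size_poly.
exists (in_qpoly _ s) => p; rewrite top_coefM s_small; apply: eq_bigr => j _.
by rewrite coef_poly ltnS leq_subr subKn ?leq_ord // inord_val.
Qed.

Lemma top_coef_nondegenerate (p1 p2 : A) :
  (forall q, top_coef (q * p1) = top_coef (q * p2)) -> p1 = p2.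
Proof.
move=> eq12; apply: val_inj; apply/polyP => l.
have [le_l_nn | lt_nn_l] := leqP l nn; last first.
  by rewrite !nth_default // (leq_trans (size_Rn _)).
have [q hq] := top_coef_representation (fun j => (j == inord l :> 'I_nn.+1)%:R).
have coef_l p : top_coef (q * p) = (polyn p)`_l.
  rewrite hq (bigD1 (inord l)) //= big1 => [|j /negbTE ->]; last by rewrite mul0r.
  by rewrite eqxx mul1r addr0 inordK.
by rewrite -!coef_l.
Qed.

End TruncatedPolynomials.

Lemma nonzerodivisor_scalar (R : idomainType) (nn : nat) (r : R) :
  r != 0 -> nonzerodivisor (r%:A : Rn R nn.+1).
Proof.
move=> rn0 x; rewrite mulr_algl => /(congr1 (@polyn _ _))/eqP.
by rewrite poly_of_qpolyZ scale_poly_eq0 (negbTE rn0) => /eqP x0; exact: val_inj.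
Qed.

Section BidualTopCoef.
Variables (R : idomainType) (nn : nat).
Local Notation A := (Rn R nn.+1).
Variables (M : lmodType A) (k : nat) (v : 'I_k -> M).
Hypothesis v_gen : forall m : M, exists c : 'I_k -> A, m = \sum_i c i *: v i.
Variable psi : (M -> A) -> A.
Hypothesis psi_bidual : is_bidual psi.

Definition coef_mx (phi : M -> A) : 'M[R]_(k, nn.+1) :=
  \matrix_(i, j) (polyn (phi (v i)))`_j.

Lemma top_coef_bidual_factors_linearly :
  factors_linearly (@is_dual _ M) coef_mx (fun phi => top_coef (psi phi)).
Proof.
move=> I r a x dx hsum; pose phi m := \sum_(i <- r) (a i)%:A * x i m.
have dphi : is_dual phi by apply: dual_sum.
have phi0 : phi = fun _ => 0.
  apply: (dual_eq0 v_gen) => // l; apply: val_inj; apply/polyP => j /=.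
  have [le_j_nn | lt_nn_j] := leqP j nn; last first.
    by rewrite nth_default ?coef0 // (leq_trans (size_Rn _)).
  transitivity ((\sum_(i <- r) a i *: coef_mx (x i)) l (inord j)); last first.
    by rewrite hsum !mxE /= coef0.
  rewrite summxE /phi poly_of_qpoly_sum coef_sum; apply: eq_bigr => i _.
  by rewrite !mxE inordK // mulr_algl poly_of_qpolyZ coefZ.
have := bidual_sum psi_bidual r (fun i => (a i)%:A) dx.
rewrite -/phi phi0 bidual0 // => psi_sum.
transitivity (top_coef (\sum_(i <- r) (a i)%:A * psi (x i))).
  by rewrite top_coef_sum; apply: eq_bigr => i _; rewrite top_coef_scalar.
by rewrite -psi_sum /top_coef /= coef0.
Qed.

Lemma exists_tM_top_coef : exists2 r : R, r != 0 &
  exists m : M, forall phi, is_dual phi -> top_coef (r%:A * psi phi) = top_coef (phi m).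
Proof.
have [r rn0 [C hC]] := factors_linearly_mx top_coef_bidual_factors_linearly.
have /fin_all_exists [q hq] := fun i => top_coef_representation (fun j => C i j).
exists r => //; exists (\sum_i q i *: v i) => phi dphi.
rewrite top_coef_scalar hC // dual_lin_comb // top_coef_sum; apply: eq_bigr => i _.
by rewrite hq; apply: eq_bigr => j _; rewrite mxE.
Qed.

End BidualTopCoef.

Theorem proposition3p5p3 (R : idomainType) (n : nat) (hn : (0 < n)%N)
  (hR : noetherian R) (M : lmodType (Rn R n)) (hM : finite_type M) :
  coker_tM_torsion M.
Proof.
case: n hn M hM => // nn _ M [k [v v_gen]] psi psi_bidual.
have [r rn0 [m hm]] := exists_tM_top_coef v_gen psi_bidual.
exists r%:A; split; first exact: nonzerodivisor_scalar.
exists m => phi dphi; apply: top_coef_nondegenerate => q.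
by rewrite mulrCA -bidual_scale // (hm _ (dual_scale q dphi)).
Qed.
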